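(* Let $f,g\in\mathbb{C}[t]$ be nonzero univariate polynomials, let $t=\theta_1+\theta_2$ in $D_2$ (where $\theta_i=y_i\partial_{y_i}$), and let $P_1,P_2,Q_1,Q_2\in\mathbb{C}[s_1,s_2]$ be bivariate polynomials with $\deg f+\deg Q_i=\deg g+\deg P_i$ ($i=1,2$), none of whose principal symbols (as operators $P_i(\theta),Q_i(\theta)$) vanish along $y_1z_1+y_2z_2=0$, and satisfying \[[\,y_1P_1(\theta),\,y_2P_2(\theta)\,]=0,\qquad Q_2(\theta+e_2)\,Q_1(\theta+e_1+e_2)=Q_1(\theta+e_1)\,Q_2(\theta+e_1+e_2).\] Let $U_i=f(t)Q_i(\theta)-y_i\,g(t)P_i(\theta)$ for $i=1,2$ and $\Psi=y_1Q_2(\theta)P_1(\theta)-y_2Q_1(\theta)P_2(\theta)$. Then $R(f,g)\,\Psi$ lies in the left ideal $(U_1,U_2)\subseteq D_2$, where $R(f,g)$ is the resultant of $f$ and $g$.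
   Context: $D_2$ is the Weyl algebra in $y_1,y_2,\partial_{y_1},\partial_{y_2}$; $\theta=(\theta_1,\theta_2)$, and for a polynomial $P$, $P(\theta+e_i)$ denotes the polynomial $P$ with its $i$-th argument shifted by $1$; $[\cdot,\cdot]$ is the commutator. The principal symbol of an operator lives in $\mathbb{C}[y_1,y_2,z_1,z_2]$. *)

From HB Require Import structures.
From mathcomp Require Import all_boot all_order all_algebra.
From mathcomp Require Import reals.
From mathcomp.real_closed Require Import complex.
From mathcomp Require Import mpoly.

Set Implicit Arguments.
Unset Strict Implicit.
Unset Printing Implicit Defensive.

Import GRing.Theory.
Local Open Scope ring_scope.

(* The complex numbers: C = R[i] for a realType R (any realType is the  *)
(* field of real numbers).                                             *)

(* The Weyl algebra D_2 over a ring K, in y_1, y_2, d_1, d_2.          *)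
(* An element is stored in its (unique) normal-ordered form            *)
(*     sum_{a,b} c_{a,b} y1^a1 y2^a2 d1^b1 d2^b2                      *)
(* as a polynomial in 4 commuting variables {mpoly K[4]}, with         *)
(*   variable 0 = y1, 1 = y2, 2 = d1 (= del_{y1}), 3 = d2 (= del_{y2}). *)
(* Addition and scalar multiplication are those of {mpoly K[4]};       *)
(* the (noncommutative) product is [wmul] below, defined by the        *)
(* Leibniz rule  d^b y^c = sum_k C(b,k) c(c-1)...(c-k+1) y^(c-k) d^(b-k)*)

Definition iy1 : 'I_4 := @Ordinal 4 0 isT.
Definition iy2 : 'I_4 := @Ordinal 4 1 isT.
Definition id1 : 'I_4 := @Ordinal 4 2 isT.
Definition id2 : 'I_4 := @Ordinal 4 3 isT.

Section Weyl.
Variable K : comNzRingType.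

Definition weyl := {mpoly K[4]}.

(* product of normal-ordered monomials  (y^a d^b) * (y^c d^d)          *)
Definition wmono (m n : 'X_{1..4}) : weyl :=
  \sum_(k1 < (minn (m id1) (n iy1)).+1)
  \sum_(k2 < (minn (m id2) (n iy2)).+1)
    (('C(m id1, k1) * (n iy1) ^_ k1 * 'C(m id2, k2) * (n iy2) ^_ k2)%N%:R)
    *: 'X_[ [multinom [tuple (m iy1 + n iy1 - k1)%N; (m iy2 + n iy2 - k2)%N;
                             (m id1 + n id1 - k1)%N; (m id2 + n id2 - k2)%N]] ].

Definition wmul (p q : weyl) : weyl :=
  \sum_(m <- msupp p) \sum_(n <- msupp q) (p@_m * q@_n) *: wmono m n.

Definition wpow (p : weyl) (k : nat) : weyl := iter k (wmul p) 1.

Definition wcomm (p q : weyl) : weyl := wmul p q - wmul q p.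

Definition wy1 : weyl := 'X_iy1.
Definition wy2 : weyl := 'X_iy2.
Definition wd1 : weyl := 'X_id1.
Definition wd2 : weyl := 'X_id2.

Definition theta1 : weyl := wmul wy1 wd1.
Definition theta2 : weyl := wmul wy2 wd2.

Definition at_theta (P : {mpoly K[2]}) : weyl :=
  \sum_(m <- msupp P) P@_m *: wmul (wpow theta1 (m ord0)) (wpow theta2 (m ord_max)).

Definition tE : weyl := theta1 + theta2.
Definition at_t (f : {poly K}) : weyl :=
  \sum_(i < size f) f`_i *: wpow tE i.

(* shifts: P(theta + e_1), P(theta + e_2), P(theta + e_1 + e_2)
   as polynomials P(s1+1,s2), P(s1,s2+1), P(s1+1,s2+1) *)
Definition shift (a b : K) (P : {mpoly K[2]}) : {mpoly K[2]} :=
  P \mPo [tuple 'X_ord0 + a%:MP; 'X_ord_max + b%:MP].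

Definition in_left_ideal2 (U1 U2 X : weyl) : Prop :=
  exists A B : weyl, X = wmul A U1 + wmul B U2.

(* order of an operator (= max total d-degree of its normal form) and
   its principal symbol in K[y1,y2,z1,z2] (variable 2 = z1, 3 = z2) *)
Definition word (p : weyl) : nat :=
  \max_(m <- msupp p) (m id1 + m id2)%N.
Definition psymbol (p : weyl) : {mpoly K[4]} :=
  \sum_(m <- msupp p | (m id1 + m id2 == word p)%N) p@_m *: 'X_[m].

Definition symbol_nonvanishing (p : weyl) : Prop :=
  exists v : 'I_4 -> K,
    v iy1 * v id1 + v iy2 * v id2 = 0 /\ (psymbol p).@[v] != 0.

End Weyl.

Definition mdegree (n : nat) (K : comNzRingType) (P : {mpoly K[n]}) : nat :=
  (msize P).-1.

Notation "p `w* q" := (wmul p q) (at level 40, left associativity).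

From HB Require Import structures.
From mathcomp Require Import all_boot all_order all_algebra.
From mathcomp Require Import reals.
From mathcomp.real_closed Require Import complex.
From mathcomp Require Import mpoly.
From mathcomp Require Import zify ring.

Set Implicit Arguments.
Unset Strict Implicit.
Unset Printing Implicit Defensive.

Import GRing.Theory Num.Theory.
Local Open Scope ring_scope.

(* D_2 acts on K[x1, x2] (y_i by multiplication, d_i by differentiation), and
   in characteristic 0 this action is faithful.  On the monomial x1^a x2^b the
   operators P(theta) and f(t) act by the scalars P(a, b) and f(a + b), so the
   hypotheses become polynomial identities: the commutation relation gives
   P2(a, b) P1(a, b + 1) = P1(a, b) P2(a + 1, b) on N^2, and the shift relation,
   by Zariski density of N^2, gives Q1(s) Q2(s - e1) = Q2(s) Q1(s - e2).
   Writing R(f, g) = u f + v g (Bezout), the operators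
     A = - u(t - 1) y2 P2(theta) - v(t - 1) Q2(theta - e1),
     B =   u(t - 1) y1 P1(theta) + v(t - 1) Q1(theta - e2)
   satisfy A U1 + B U2 = R(f, g) Psi: on x^e, the coefficients of x^e and of
   x^(e + e1 + e2) are the two identities above, and those of x^(e + e_i) are
   (u f + v g)(|e|) times the ones of Psi. *)

Lemma ffactnD (n d j : nat) : (n ^_ (d + j) = n ^_ d * (n - d) ^_ j)%N.
Proof.
elim: j => [|j IHj]; first by rewrite addn0 ffactn0 muln1.
by rewrite addnS !ffactnSr IHj subnDA mulnA.
Qed.

Lemma ffact_Vandermonde (b c x : nat) :
  (\sum_(k < b.+1) 'C(b, k) * c ^_ k * x ^_ (b - k) = (c + x) ^_ b)%N.
Proof.
rewrite -bin_ffact -binomial.Vandermonde big_distrl /=; apply: eq_bigr => k _.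
have le_kb : (k <= b)%N by rewrite -ltnS.
rewrite -!bin_ffact -(bin_fact le_kb) !mulnA; congr (_ * _)%N; lia.
Qed.

(* Terms with [k > c] of the Vandermonde sum vanish, hence the bound [minn b c]
   used by [wmono]. *)
Lemma ffact_Vandermonde_min (b c x : nat) :
  (\sum_(k < (minn b c).+1) 'C(b, k) * c ^_ k * x ^_ (b - k) = (c + x) ^_ b)%N.
Proof.
rewrite -ffact_Vandermonde.
rewrite (big_ord_widen b.+1 (fun k => 'C(b, k) * c ^_ k * x ^_ (b - k))%N);
  last by rewrite ltnS geq_minl.
rewrite big_mkcond /=; apply: eq_bigr => k _; case: ifP => // lt_k_min.
rewrite ffact_small ?muln0 ?mul0n //; move: lt_k_min.
by rewrite ltnS leq_min -ltnS ltn_ord ltnNge => /negbT.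
Qed.

(* One variable of the Leibniz rule: on [x^e], the normal form of
   [(y^a d^b) (y^c d^d)] built by [wmono] acts as the two factors in turn. *)
Lemma ffact_Leibniz (K : nzRingType) (V : lmodType K) (Y : nat -> V)
    (a b c d e : nat) :
  \sum_(k < (minn b c).+1)
     (('C(b, k) * c ^_ k * e ^_ (b + d - k))%N%:R : K) *:
       Y (a + c - k + e - (b + d - k))%N
  = ((e ^_ d * (c + e - d) ^_ b)%N%:R : K) *: Y (a + (c + e - d) - b)%N.
Proof.
have le_k (k : 'I_(minn b c).+1) : (k <= b)%N /\ (k <= c)%N.
  by move: (ltn_ord k); rewrite ltnS leq_min => /andP.
have [lt_ed | le_de] := ltnP e d.
  rewrite (ffact_small lt_ed) mul0n scale0r big1 // => k _.
  by have [le_kb _] := le_k k; rewrite (@ffact_small e) ?muln0 ?scale0r //; lia.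
rewrite -addnBA // -[in RHS](ffact_Vandermonde_min b c (e - d)).
rewrite big_distrr natr_sum scaler_suml /=.
apply: eq_bigr => k _; have [le_kb le_kc] := le_k k.
rewrite (_ : b + d - k = d + (b - k))%N ?ffactnD; last by lia.
have [lt_edbk | le_bked] := ltnP (e - d) (b - k).
  by rewrite (ffact_small lt_edbk) !muln0 ?mul0n !scale0r.
by congr (_%:R *: Y _); [rewrite mulnCA | lia].
Qed.

Section LinearExtension.
Variables (n : nat) (K : comNzRingType) (V : lmodType K) (F : 'X_{1..n} -> V).

Definition mlin (p : {mpoly K[n]}) : V := \sum_(m <- msupp p) p@_m *: F m.

Lemma mlinE (s : seq 'X_{1..n}) p : uniq s -> {subset msupp p <= s} ->
  mlin p = \sum_(m <- s) p@_m *: F m.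
Proof.
move=> uniq_s supp_s; rewrite (bigID (mem (msupp p))) /= [X in _ = _ + X]big1.
  rewrite addr0 -big_filter; apply/perm_big/uniq_perm; rewrite ?filter_uniq //.
  by move=> m; rewrite mem_filter andb_idr //; apply: supp_s.
by move=> m /memN_msupp_eq0 ->; rewrite scale0r.
Qed.

Lemma mlin_is_linear : linear mlin.
Proof.
move=> c p q; pose s := undup (msupp p ++ msupp q ++ msupp (c *: p + q)).
rewrite !(@mlinE s) ?undup_uniq //;
  try by move=> m supp_m; rewrite /s mem_undup !mem_cat supp_m ?orbT.
rewrite scaler_sumr -big_split; apply: eq_bigr => m _.
by rewrite mcoeffD mcoeffZ scalerDl scalerA.
Qed.

HB.instance Definition _ := GRing.isLinear.Build K {mpoly K[n]} V *:%R mlin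
  mlin_is_linear.

Lemma mlin0 : mlin 0 = 0. Proof. exact: raddf0. Qed.
Lemma mlinN : {morph mlin : p / - p}. Proof. exact: raddfN. Qed.
Lemma mlinD : {morph mlin : p q / p + q}. Proof. exact: raddfD. Qed.
Lemma mlinB : {morph mlin : p q / p - q}. Proof. exact: raddfB. Qed.
Lemma mlinZ c : {morph mlin : p / c *: p}. Proof. exact: linearZ. Qed.

Lemma mlin_sum (I : Type) (r : seq I) (P : pred I) (G : I -> {mpoly K[n]}) :
  mlin (\sum_(i <- r | P i) G i) = \sum_(i <- r | P i) mlin (G i).
Proof. exact: raddf_sum. Qed.

Lemma mlinX m : mlin 'X_[m] = F m.
Proof. by rewrite /mlin msuppX big_seq1 mcoeffX eqxx scale1r. Qed.

End LinearExtension.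

Definition mnm2 (a b : nat) : 'X_{1..2} := [multinom [tuple a; b]].

Lemma mnm2E0 a b : mnm2 a b ord0 = a. Proof. by []. Qed.
Lemma mnm2E1 a b : mnm2 a b ord_max = b. Proof. by []. Qed.

Lemma mnm2_eta (e : 'X_{1..2}) : mnm2 (e ord0) (e ord_max) = e.
Proof.
apply/mnmP => -[[|[|//]] lt_i2]; congr (e _); exact: val_inj.
Qed.

(* [y^a d^b] sends [x^e] to [e^_b x^(a + e - b)]; when some [b_i > e_i] the
   coefficient is [0], so the truncated subtraction in the exponent is harmless. *)
Definition wmono_act (K : comNzRingType) (m : 'X_{1..4}) (e : 'X_{1..2}) : {mpoly K[2]} :=
  ((e ord0 ^_ m id1 * e ord_max ^_ m id2)%N%:R) *:
    'X_[mnm2 (m iy1 + e ord0 - m id1) (m iy2 + e ord_max - m id2)].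

Arguments wmono_act {K} m e.

Local Notation wact p e := (mlin (fun m => wmono_act m e) p).
Local Notation wapply p v := (mlin (fun e => wact p e) v).

Section Action.
Variable K : comNzRingType.
Implicit Types (p q : weyl K) (e : 'X_{1..2}) (m n : 'X_{1..4}).

Lemma wact_wmono m n e : wact (wmono K m n) e =
  ((e ord0 ^_ n id1 * e ord_max ^_ n id2)%N%:R) *:
     wmono_act m (mnm2 (n iy1 + e ord0 - n id1) (n iy2 + e ord_max - n id2)).
Proof.
set a1 := m iy1; set a2 := m iy2; set b1 := m id1; set b2 := m id2.
set c1 := n iy1; set c2 := n iy2; set d1 := n id1; set d2 := n id2.
set e1 := e ord0; set e2 := e ord_max.
transitivity (\sum_(k1 < (minn b1 c1).+1)
  (('C(b1, k1) * c1 ^_ k1 * e1 ^_ (b1 + d1 - k1))%N%:R : K) *: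
  \sum_(k2 < (minn b2 c2).+1)
    (('C(b2, k2) * c2 ^_ k2 * e2 ^_ (b2 + d2 - k2))%N%:R : K) *:
    'X_[mnm2 (a1 + c1 - k1 + e1 - (b1 + d1 - k1)) (a2 + c2 - k2 + e2 - (b2 + d2 - k2))]).
  rewrite mlin_sum; apply: eq_bigr => k1 _; rewrite mlin_sum scaler_sumr.
  apply: eq_bigr => k2 _; rewrite mlinZ mlinX /wmono_act !scalerA -!natrM /=.
  by congr (_%:R *: 'X_[_]); first [ring | lia].
under eq_bigr do rewrite (ffact_Leibniz (fun v => 'X_[mnm2 _ v])).
rewrite (ffact_Leibniz (fun u => _ *: 'X_[mnm2 u _])) /wmono_act !scalerA -!natrM.
by congr (_%:R *: 'X_[_]); first [ring | lia].
Qed.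

Lemma wapply_wmono_act p n e : wapply p (wmono_act n e) =
  ((e ord0 ^_ n id1 * e ord_max ^_ n id2)%N%:R) *:
     wact p (mnm2 (n iy1 + e ord0 - n id1) (n iy2 + e ord_max - n id2)).
Proof. by rewrite mlinZ mlinX. Qed.

Lemma wact_mul p q e : wact (p `w* q) e = wapply p (wact q e).
Proof.
rewrite /wmul [LHS]mlin_sum; under eq_bigr do rewrite mlin_sum.
under eq_bigr do under eq_bigr do rewrite mlinZ wact_wmono.
rewrite exchange_big [wact q e]/mlin mlin_sum; apply: eq_bigr => n _.
rewrite mlinZ wapply_wmono_act [wact p _]/mlin !scaler_sumr.
by apply: eq_bigr => m _; rewrite !scalerA; congr (_ *: _); ring.
Qed.

Lemma wact_y1 e : wact (wy1 K) e = 'X_[mnm2 (e ord0).+1 (e ord_max)].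
Proof. by rewrite mlinX /wmono_act !mnm1E /= ffactn0 scale1r !subn0. Qed.

Lemma wact_y2 e : wact (wy2 K) e = 'X_[mnm2 (e ord0) (e ord_max).+1].
Proof. by rewrite mlinX /wmono_act !mnm1E /= ffactn0 scale1r !subn0. Qed.

Lemma wact_d1 e : wact (wd1 K) e = (e ord0)%:R *: 'X_[mnm2 (e ord0).-1 (e ord_max)].
Proof. by rewrite mlinX /wmono_act !mnm1E /= ffactn0 ffactn1 muln1 subn1 subn0. Qed.

Lemma wact_d2 e : wact (wd2 K) e = (e ord_max)%:R *: 'X_[mnm2 (e ord0) (e ord_max).-1].
Proof. by rewrite mlinX /wmono_act !mnm1E /= ffactn0 ffactn1 mul1n subn1 subn0. Qed.

End Action.

Definition meval2 (K : comNzRingType) (P : {mpoly K[2]}) (x y : K) : K :=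
  P.@[fun i : 'I_2 => if i == ord0 then x else y].

Lemma meval2E (K : comNzRingType) (P : {mpoly K[2]}) x y :
  meval2 P x y = \sum_(m <- msupp P) P@_m * (x ^+ m ord0 * y ^+ m ord_max).
Proof.
rewrite /meval2 mevalE; apply: eq_bigr => m _.
by rewrite big_ord_recr big_ord1 (_ : widen_ord _ ord0 = ord0) //; apply: val_inj.
Qed.

Lemma meval2_shift (K : comNzRingType) (a b : K) P x y :
  meval2 (shift a b P) x y = meval2 P (x + a) (y + b).
Proof.
rewrite /meval2 /shift comp_mpoly_meval; apply: meval_eq => -[[|[|//]] lt_i2];
  by rewrite (tnth_nth 0) /= mevalD mevalC mevalXU.
Qed.

Lemma meval2M (K : comNzRingType) (P Q : {mpoly K[2]}) x y :
  meval2 (P * Q) x y = meval2 P x y * meval2 Q x y.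
Proof. exact: mevalM. Qed.

Lemma meval2B (K : comNzRingType) (P Q : {mpoly K[2]}) x y :
  meval2 (P - Q) x y = meval2 P x y - meval2 Q x y.
Proof. exact: mevalB. Qed.

Section Diagonal.
Variable K : comNzRingType.
Implicit Types (p q : weyl K) (e : 'X_{1..2}) (m n : 'X_{1..4}).

Definition wdiag (p : weyl K) (h : 'X_{1..2} -> K) :=
  forall e, wact p e = h e *: 'X_[e].

Lemma wdiag1 : wdiag 1 (fun=> 1).
Proof.
move=> e; rewrite -mpolyX0 mlinX /wmono_act !mnm0E !ffactn0 muln1 !scale1r.
by rewrite !add0n !subn0 mnm2_eta.
Qed.

Lemma wdiagD p q h k : wdiag p h -> wdiag q k -> wdiag (p + q) (fun e => h e + k e).
Proof. by move=> hp hq e; rewrite mlinD hp hq scalerDl. Qed.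

Lemma wdiagM p q h k : wdiag p h -> wdiag q k -> wdiag (p `w* q) (fun e => h e * k e).
Proof. by move=> hp hq e; rewrite wact_mul hq mlinZ mlinX hp scalerA mulrC. Qed.

Lemma wdiagX p h k : wdiag p h -> wdiag (wpow p k) (fun e => h e ^+ k).
Proof.
move=> hp; elim: k => [|k IHk] e; first by rewrite expr0 wdiag1.
by rewrite /wpow iterS -/(wpow p k) (wdiagM hp IHk) exprS.
Qed.

Lemma wdiag_theta1 : wdiag (theta1 K) (fun e => (e ord0)%:R).
Proof.
move=> e; rewrite /theta1 wact_mul wact_d1 mlinZ mlinX wact_y1 mnm2E0 mnm2E1.
by case: (e ord0) (mnm2_eta e) => [|a] <-; rewrite ?scale0r.
Qed.

Lemma wdiag_theta2 : wdiag (theta2 K) (fun e => (e ord_max)%:R).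
Proof.
move=> e; rewrite /theta2 wact_mul wact_d2 mlinZ mlinX wact_y2 mnm2E0 mnm2E1.
by case: (e ord_max) (mnm2_eta e) => [|b] <-; rewrite ?scale0r.
Qed.

Lemma wdiag_at_theta P :
  wdiag (at_theta P) (fun e => meval2 P (e ord0)%:R (e ord_max)%:R).
Proof.
move=> e; rewrite mlin_sum meval2E scaler_suml; apply: eq_bigr => m _.
by rewrite mlinZ (wdiagM (wdiagX _ wdiag_theta1) (wdiagX _ wdiag_theta2)) scalerA.
Qed.

Lemma wdiag_at_t f :
  wdiag (at_t f) (fun e => f.[(e ord0)%:R + (e ord_max)%:R]).
Proof.
move=> e; rewrite mlin_sum horner_coef scaler_suml; apply: eq_bigr => i _.
by rewrite mlinZ (wdiagX _ (wdiagD wdiag_theta1 wdiag_theta2)) scalerA.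
Qed.

Lemma wact_y1_diag q h a b : wdiag q h ->
  wact (wy1 K `w* q) (mnm2 a b) = h (mnm2 a b) *: 'X_[mnm2 a.+1 b].
Proof. by move=> hq; rewrite wact_mul hq mlinZ mlinX wact_y1. Qed.

Lemma wact_y2_diag q h a b : wdiag q h ->
  wact (wy2 K `w* q) (mnm2 a b) = h (mnm2 a b) *: 'X_[mnm2 a b.+1].
Proof. by move=> hq; rewrite wact_mul hq mlinZ mlinX wact_y2. Qed.

Lemma scalemX_inj (m : 'X_{1..2}) : injective (fun c : K => c *: 'X_[m] : {mpoly K[2]}).
Proof. by move=> c d /(congr1 (mcoeff m)); rewrite !mcoeffZ mcoeffX eqxx !mulr1. Qed.

Lemma at_theta_mul_eigen (P Q P' Q' : {mpoly K[2]}) :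
  at_theta P `w* at_theta Q = at_theta P' `w* at_theta Q' ->
  forall a b : nat, meval2 P a%:R b%:R * meval2 Q a%:R b%:R =
                    meval2 P' a%:R b%:R * meval2 Q' a%:R b%:R.
Proof.
move=> PQ a b; have := congr1 (fun p => wact p (mnm2 a b)) PQ.
by rewrite !(wdiagM (wdiag_at_theta _) (wdiag_at_theta _)) => /scalemX_inj.
Qed.

Lemma comm_y_theta_eigen P1 P2 :
  wcomm (wy1 K `w* at_theta P1) (wy2 K `w* at_theta P2) = 0 ->
  forall a b : nat, meval2 P2 a%:R b%:R * meval2 P1 a%:R (b%:R + 1) =
                    meval2 P1 a%:R b%:R * meval2 P2 (a%:R + 1) b%:R.
Proof.
move=> comm0 a b; have := congr1 (fun p => wact p (mnm2 a b)) comm0.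
rewrite /wcomm mlinB mlin0 (wact_mul (wy1 K `w* _)) (wact_mul (wy2 K `w* _)).
rewrite (wact_y2_diag _ _ (wdiag_at_theta _)) (wact_y1_diag _ _ (wdiag_at_theta _)).
rewrite !mlinZ !mlinX (wact_y2_diag _ _ (wdiag_at_theta _)).
rewrite (wact_y1_diag _ _ (wdiag_at_theta _)) !scalerA.
by move/eqP; rewrite subr_eq0 => /eqP /scalemX_inj; rewrite -!natr1.
Qed.

End Diagonal.

Lemma mnm4_eq (m1 m2 : 'X_{1..4}) : m1 iy1 = m2 iy1 -> m1 iy2 = m2 iy2 ->
  m1 id1 = m2 id1 -> m1 id2 = m2 id2 -> m1 = m2.
Proof.
by move=> ? ? ? ?; apply/mnmP => -[[|[|[|[|//]]]] lt_i4];
  rewrite (bool_irrelevance lt_i4 isT).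
Qed.

Section CharZero.
Variable K : idomainType.
Hypothesis K_char0 : [pchar K] =i pred0.
Implicit Types (p q : weyl K) (e : 'X_{1..2}) (m n : 'X_{1..4}).

Lemma pchar0_natr_eq0 (n : nat) : (n%:R == 0 :> K) = (n == 0)%N.
Proof. exact: (iffLR (pcharf0P K)). Qed.

Lemma pchar0_natrI : injective (fun n : nat => n%:R : K).
Proof.
move=> i j eq_ij; wlog le_ij : i j eq_ij / (i <= j)%N.
  by move=> wl; case: (leqP i j) => [|/ltnW] ?; [apply: wl | apply/esym/wl].
apply/eqP; rewrite eqn_leq le_ij -subn_eq0 -pchar0_natr_eq0 natrB //.
by rewrite eq_ij subrr eqxx.
Qed.

(* Apply [p] to [x^b] for [b] the [d]-exponent of a monomial [m0] of [p] of
   minimal order: [m0] is the only monomial contributing [x^(y-exponent of m0)]. *)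
Lemma wact_faithful p : (forall e, wact p e = 0) -> p = 0.
Proof.
move=> p_ann; apply: contraTeq isT => p_neq0.
pose w (m : 'X_{1..4}) := (m id1 + m id2)%N.
have has_w : exists k, has (fun m => w m == k) (msupp p).
  by exists (w (mlead p)); apply/hasP; exists (mlead p); rewrite ?mlead_supp.
have [k /hasP[m0 m0_supp /eqP w_m0] min_k] := ex_minnP has_w.
set b := mnm2 (m0 id1) (m0 id2); set t := mnm2 (m0 iy1) (m0 iy2).
have others m : m \in msupp p -> m != m0 -> (wmono_act m b : {mpoly K[2]})@_t = 0.
  move=> m_supp m_neq_m0; rewrite mcoeffZ mcoeffX.
  case: eqVneq => [/mnmP mt|]; last by rewrite mulr0.
  move: (mt ord0) (mt ord_max); rewrite !mnm2E0 !mnm2E1 => mt0 mt1.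
  have [le_m1|lt_m1] := leqP (m id1) (m0 id1).
    have [le_m2|lt_m2] := leqP (m id2) (m0 id2).
      have : (k <= w m)%N by apply: min_k; apply/hasP; exists m.
      by rewrite -w_m0 /w => le_w; case/eqP: m_neq_m0; apply: mnm4_eq; lia.
    by rewrite (@ffact_small (m0 id2)) ?muln0 ?mul0r.
  by rewrite ffact_small ?mul0n ?mul0r.
have := congr1 (mcoeff t) (p_ann b); rewrite mcoeff0 /mlin raddf_sum.
rewrite (bigD1_seq m0) ?msupp_uniq //= big1_seq => [|m /andP[m_neq_m0 m_supp]];
  last by rewrite mcoeffZ others ?mulr0.
rewrite addr0 !mcoeffZ mcoeffX /b !mnm2E0 !mnm2E1 !addnK eqxx mulr1 !ffactnn.
move/eqP; rewrite mulf_eq0 mcoeff_eq0 m0_supp pchar0_natr_eq0 muln_eq0.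
by rewrite !eqn0Ngt !fact_gt0.
Qed.

Lemma wact_ext p q : (forall e, wact p e = wact q e) -> p = q.
Proof.
move=> pq; apply/eqP; rewrite -subr_eq0; apply/eqP/wact_faithful => e.
by rewrite mlinB pq subrr.
Qed.

Lemma poly_natS_roots_eq0 (p : {poly K}) : (forall n : nat, p.[n.+1%:R] = 0) -> p = 0.
Proof.
move=> p_roots; apply: (@roots_geq_poly_eq0 _ p [seq i.+1%:R | i <- iota 0 (size p)]).
- by apply/allP => x /mapP[i _ ->]; apply/eqP.
- by rewrite map_inj_uniq ?iota_uniq // => i j /pchar0_natrI [].
- by rewrite size_map size_iota.
Qed.

Lemma meval2_natS_eq0 (D : {mpoly K[2]}) :
  (forall i j : nat, meval2 D i.+1%:R j.+1%:R = 0) -> forall x y, meval2 D x y = 0.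
Proof.
move=> D_grid.
pose px (y : K) : {poly K} := \sum_(m <- msupp D) (D@_m * y ^+ m ord_max) *: 'X^(m ord0).
pose py (x : K) : {poly K} := \sum_(m <- msupp D) (D@_m * x ^+ m ord0) *: 'X^(m ord_max).
have px_eval x y : (px y).[x] = meval2 D x y.
  rewrite meval2E horner_sum; apply: eq_bigr => m _.
  by rewrite hornerZ hornerXn mulrCA mulrA mulrC mulrA.
have py_eval x y : (py x).[y] = meval2 D x y.
  by rewrite meval2E horner_sum; apply: eq_bigr => m _; rewrite hornerZ hornerXn mulrA.
have D_row x (j : nat) : meval2 D x j.+1%:R = 0.
  by rewrite -px_eval (@poly_natS_roots_eq0 (px _)) ?horner0 // => i; rewrite px_eval.
move=> x y; rewrite -py_eval (@poly_natS_roots_eq0 (py x)) ?horner0 // => j.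
by rewrite py_eval.
Qed.

Lemma shift_theta_eigen (Q1 Q2 : {mpoly K[2]}) :
  at_theta (shift 0 1 Q2) `w* at_theta (shift 1 1 Q1) =
    at_theta (shift 1 0 Q1) `w* at_theta (shift 1 1 Q2) ->
  forall x y, meval2 Q1 x y * meval2 Q2 (x - 1) y = meval2 Q2 x y * meval2 Q1 x (y - 1).
Proof.
move=> /at_theta_mul_eigen grid.
have C1E x y : meval2 (shift (-1) 0 Q2) x y = meval2 Q2 (x - 1) y.
  by rewrite meval2_shift addr0.
have C2E x y : meval2 (shift 0 (-1) Q1) x y = meval2 Q1 x (y - 1).
  by rewrite meval2_shift addr0.
(* Generalizing the shifted polynomials keeps unification from unfolding [shift]. *)
move: grid C1E C2E (meval2_shift 0 1 Q2) (meval2_shift 1 1 Q1) (meval2_shift 1 0 Q1)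
  (meval2_shift 1 1 Q2).
move: (shift 0 1 Q2) (shift 1 1 Q1) (shift 1 0 Q1) (shift 1 1 Q2) (shift (-1) 0 Q2)
  (shift 0 (-1) Q1) => S01 S11 S10 S11' C1 C2 grid C1E C2E S01E S11E S10E S11'E x y.
rewrite -C1E -C2E; apply/eqP; rewrite -subr_eq0 -!meval2M -meval2B; apply/eqP.
apply: meval2_natS_eq0 => a b; rewrite meval2B !meval2M C1E C2E.
have := grid a b; rewrite S01E S11E S10E S11'E !addr0 -!natr1 !addrK => eq_ab.
by rewrite mulrC eq_ab mulrC subrr.
Qed.

Lemma resultant_ideal_witness (f g u v : {poly K}) (r : K) (P1 P2 Q1 Q2 : {mpoly K[2]}) :
  r%:P = u * f + v * g ->
  (forall a b : nat, meval2 P2 a%:R b%:R * meval2 P1 a%:R (b%:R + 1) =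
                     meval2 P1 a%:R b%:R * meval2 P2 (a%:R + 1) b%:R) ->
  (forall x y, meval2 Q1 x y * meval2 Q2 (x - 1) y =
               meval2 Q2 x y * meval2 Q1 x (y - 1)) ->
  let u' := at_t (u \Po ('X - 1)) in
  let v' := at_t (v \Po ('X - 1)) in
  let U1 := at_t f `w* at_theta Q1 - wy1 K `w* (at_t g `w* at_theta P1) in
  let U2 := at_t f `w* at_theta Q2 - wy2 K `w* (at_t g `w* at_theta P2) in
  let Psi := wy1 K `w* (at_theta Q2 `w* at_theta P1)
             - wy2 K `w* (at_theta Q1 `w* at_theta P2) in
  r *: Psi =
      (- (u' `w* (wy2 K `w* at_theta P2)) - v' `w* at_theta (shift (-1) 0 Q2)) `w* U1
    + (u' `w* (wy1 K `w* at_theta P1) + v' `w* at_theta (shift 0 (-1) Q1)) `w* U2.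
Proof.
move=> bezout commP shiftQ u' v' U1 U2 Psi.
have bezout_at x : r = u.[x] * f.[x] + v.[x] * g.[x].
  by have := congr1 (horner^~ x) bezout; rewrite hornerC hornerD !hornerM.
pose ev (P : {mpoly K[2]}) (a b : nat) := meval2 P a%:R b%:R.
pose deg (a b : nat) : K := a%:R + b%:R.
have U1_ab a b : wact U1 (mnm2 a b) = (f.[deg a b] * ev Q1 a b) *: 'X_[mnm2 a b]
                                   - (g.[deg a b] * ev P1 a b) *: 'X_[mnm2 a.+1 b].
  rewrite mlinB (wdiagM (wdiag_at_t _) (wdiag_at_theta _)).
  by rewrite (wact_y1_diag _ _ (wdiagM (wdiag_at_t _) (wdiag_at_theta _))).
have U2_ab a b : wact U2 (mnm2 a b) = (f.[deg a b] * ev Q2 a b) *: 'X_[mnm2 a b]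
                                   - (g.[deg a b] * ev P2 a b) *: 'X_[mnm2 a b.+1].
  rewrite mlinB (wdiagM (wdiag_at_t _) (wdiag_at_theta _)).
  by rewrite (wact_y2_diag _ _ (wdiagM (wdiag_at_t _) (wdiag_at_theta _))).
have Psi_ab a b : wact Psi (mnm2 a b) = (ev Q2 a b * ev P1 a b) *: 'X_[mnm2 a.+1 b]
                                  - (ev Q1 a b * ev P2 a b) *: 'X_[mnm2 a b.+1].
  rewrite mlinB (wact_y1_diag _ _ (wdiagM (wdiag_at_theta _) (wdiag_at_theta _))).
  by rewrite (wact_y2_diag _ _ (wdiagM (wdiag_at_theta _) (wdiag_at_theta _))).
set A := - (u' `w* (wy2 K `w* at_theta P2)) - v' `w* at_theta (shift (-1) 0 Q2).
set B := u' `w* (wy1 K `w* at_theta P1) + v' `w* at_theta (shift 0 (-1) Q1).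
have A_ab a b : wact A (mnm2 a b)
  = - ((u.[deg a b] * ev P2 a b) *: 'X_[mnm2 a b.+1])
    - (v.[deg a b - 1] * meval2 Q2 (a%:R - 1) b%:R) *: 'X_[mnm2 a b].
  rewrite /A mlinB mlinN wact_mul (wact_y2_diag _ _ (wdiag_at_theta _)) mlinZ mlinX.
  rewrite (wdiag_at_t _) (wdiagM (wdiag_at_t _) (wdiag_at_theta _)).
  rewrite /= !mnm2E0 !mnm2E1 !horner_comp !hornerE meval2_shift addr0 scalerA.
  by rewrite /deg /ev -natr1 addrA addrK mulrC.
have B_ab a b : wact B (mnm2 a b)
  = (u.[deg a b] * ev P1 a b) *: 'X_[mnm2 a.+1 b]
    + (v.[deg a b - 1] * meval2 Q1 a%:R (b%:R - 1)) *: 'X_[mnm2 a b].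
  rewrite /B mlinD wact_mul (wact_y1_diag _ _ (wdiag_at_theta _)) mlinZ mlinX.
  rewrite (wdiag_at_t _) (wdiagM (wdiag_at_t _) (wdiag_at_theta _)).
  rewrite /= !mnm2E0 !mnm2E1 !horner_comp !hornerE meval2_shift addr0 scalerA.
  by rewrite /deg /ev -natr1 addrAC addrK mulrC.
clearbody A B U1 U2 Psi.
apply: wact_ext => e; rewrite -(mnm2_eta e); move: (e ord0) (e ord_max) => a b.
rewrite mlinZ Psi_ab mlinD !wact_mul U1_ab U2_ab !(mlinB, mlinZ, mlinX) !A_ab !B_ab.
have [dega degb] : deg a.+1 b - 1 = deg a b /\ deg a b.+1 - 1 = deg a b.
  by rewrite /deg -!natr1 addrAC addrK addrA addrK.
apply/mpolyP => t; rewrite !(mcoeffD, mcoeffB, mcoeffN, mcoeffZ, mcoeffX).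
have deg_sym : deg a.+1 b = deg a b.+1 by rewrite /deg -!natr1 addrAC addrA.
rewrite dega degb deg_sym (bezout_at (deg a b)) /ev -!natr1 !addrK.
apply/eqP; rewrite -subr_eq0; apply/eqP.
transitivity ((mnm2 a b == t)%:R * f.[deg a b] * v.[deg a b - 1] *
    (meval2 Q1 a%:R b%:R * meval2 Q2 (a%:R - 1) b%:R
     - meval2 Q2 a%:R b%:R * meval2 Q1 a%:R (b%:R - 1))
  + (mnm2 a.+1 b.+1 == t)%:R * g.[deg a b] * u.[deg a b.+1] *
    (meval2 P2 a%:R b%:R * meval2 P1 a%:R (b%:R + 1)
     - meval2 P1 a%:R b%:R * meval2 P2 (a%:R + 1) b%:R)).
  by ring.
by rewrite shiftQ commP !subrr !mulr0 addr0.
Qed.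

End CharZero.

Lemma resultant_bezout (F : fieldType) (f g : {poly F}) : f != 0 -> g != 0 ->
  exists u v : {poly F}, (resultant f g)%:P = u * f + v * g.
Proof.
move=> f_neq0 g_neq0.
have [f_const | f_nc] := leqP (size f) 1.
  have f_eq := size1_polyC f_const.
  have f0_neq0 : f`_0 != 0 by apply: contraNneq f_neq0 => f0_eq0; rewrite f_eq f0_eq0.
  exists (resultant f g / f`_0)%:P, 0.
  by rewrite mul0r addr0 [X in _ = _ * X]f_eq -polyCM divfK.
have [g_const | g_nc] := leqP (size g) 1.
  have g_eq := size1_polyC g_const.
  have g0_neq0 : g`_0 != 0 by apply: contraNneq g_neq0 => g0_eq0; rewrite g_eq g0_eq0.
  exists 0, (resultant f g / g`_0)%:P.
  by rewrite mul0r add0r [X in _ = _ * X]g_eq -polyCM divfK.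
by have [[u v] /= _ bezout] := resultant_in_ideal f_nc g_nc; exists u, v.
Qed.

Theorem lemma11p4 (R : realType) (f g : {poly (complex R)})
    (P1 P2 Q1 Q2 : {mpoly (complex R)[2]}) :
  f != 0 -> g != 0 ->
  ((size f).-1 + mdegree Q1 = (size g).-1 + mdegree P1)%N ->
  ((size f).-1 + mdegree Q2 = (size g).-1 + mdegree P2)%N ->
  symbol_nonvanishing (at_theta P1) ->
  symbol_nonvanishing (at_theta P2) ->
  symbol_nonvanishing (at_theta Q1) ->
  symbol_nonvanishing (at_theta Q2) ->
  wcomm (wmul (wy1 _) (at_theta P1)) (wmul (wy2 _) (at_theta P2)) = 0 ->
  wmul (at_theta (shift 0 1 Q2)) (at_theta (shift 1 1 Q1)) =
    wmul (at_theta (shift 1 0 Q1)) (at_theta (shift 1 1 Q2)) ->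
  let U1 := at_t f `w* at_theta Q1 - wy1 _ `w* (at_t g `w* at_theta P1) in
  let U2 := at_t f `w* at_theta Q2 - wy2 _ `w* (at_t g `w* at_theta P2) in
  let Psi := wy1 _ `w* (at_theta Q2 `w* at_theta P1)
             - wy2 _ `w* (at_theta Q1 `w* at_theta P2) in
  in_left_ideal2 U1 U2 (resultant f g *: Psi).
Proof.
move=> f_neq0 g_neq0 _ _ _ _ _ _ commP shiftQ U1 U2 Psi.
have [u [v bezout]] := resultant_bezout f_neq0 g_neq0.
have char0 := @pchar_num (complex R).
by do 2!eexists; apply: (resultant_ideal_witness char0 bezout
  (comm_y_theta_eigen commP) (shift_theta_eigen char0 shiftQ)).
Qed.
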